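(* Let $h=(w,\xi)$ be a Charlier diagram of length $n$ and suppose the $j$-th step of $w$ is blue East or South-East of height $k$. Then $$\mathrm{cr}(\varphi_r(h);j)=\mathrm{ne}(\varphi_l(h);j)=\xi_j-1,\qquad \mathrm{ne}(\varphi_r(h);j)=\mathrm{cr}(\varphi_l(h);j)=k-\xi_j.$$
   Context: A Motzkin path of length $n$ is a sequence of points $s_0=(0,0),s_1,\dots,s_n=(n,0)$ in $\mathbb Z^2$, $s_i=(i,y_i)$, with $y_i\ge0$ and each step $(s_{i-1},s_i)$ either East ($y_i=y_{i-1}$), North-East ($y_i=y_{i-1}+1$) or South-East ($y_i=y_{i-1}-1$); the step $(s_{i-1},s_i)$ has index $i$ and height $y_{i-1}$. A restricted bicolored Motzkin path is a Motzkin path whose East steps are each colored red or blue, such that every blue East step has height $>0$. A Charlier diagram of length $n$ is a pair $h=(w,\xi)$ with $w$ a restricted bicolored Motzkin path of length $n$ and $\xi=(\xi_1,\dots,\xi_n)$ integers with $\xi_i=1$ if step $i$ is North-East or red East, and $1\le\xi_i\le k$ if step $i$ is South-East or blue East of height $k$. The partition $\varphi_l(h)$ of $[n]$ is built as follows: maintain a set $V$ (initially empty) and edge set $E$; for $i=1,\dots,n$: if step $i$ is North-East, add $i$ to $V$; if red East, do nothing; if South-East or blue East (then $|V|$ equals the height $k$ of the step), let $x$ be the $\xi_i$-th smallest element of $V$, add edge $(x,i)$ to $E$, remove $x$ from $V$, and if the step is blue East add $i$ to $V$. $\varphi_l(h)$ is the partition of $[n]$ whose blocks are the connected components of $([n],E)$.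 $\varphi_r(h)$ is defined identically except that $x$ is the $\xi_i$-th largest element of $V$. For a partition $\pi$, edges are pairs $(i,j)$, $i<j$, of consecutive elements of a block; edges $e_1=(i_1,j_1)$, $e_2=(i_2,j_2)$ form a crossing with initial edge $e_1$ if $i_1<i_2<j_1<j_2$, and a nesting with interior edge $e_2$ if $i_1<i_2<j_2<j_1$. For $j$ the right endpoint of some edge, $\mathrm{cr}(\pi;j)$ is the number of crossings whose initial edge has right endpoint $j$, and $\mathrm{ne}(\pi;j)$ the number of nestings whose interior edge has right endpoint $j$. *)

From HB Require Import structures.
From mathcomp Require Import all_boot all_order all_algebra.
From mathcomp Require Import ssrint.
Set Implicit Arguments. Unset Strict Implicit. Unset Printing Implicit Defensive.
Import GRing.Theory Num.Theory intZmod.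

Inductive step := NE | SE | ERed | EBlue.

Definition step_code (s : step) : nat :=
  match s with NE => 0 | SE => 1 | ERed => 2 | EBlue => 3 end.
Definition code_step (n : nat) : step :=
  match n with 0 => NE | 1 => SE | 2 => ERed | _ => EBlue end.
Lemma step_codeK : cancel step_code code_step. Proof. by case. Qed.
HB.instance Definition _ := Equality.copy step (can_type step_codeK).

Definition delta (s : step) : int :=
  match s with NE => 1 | SE => -1 | _ => 0 end%R.

(* y_i : height after the first i steps (so step i has height y_{i-1}) *)
Definition yh (w : seq step) (i : nat) : int := (\sum_(s <- take i w) delta s)%R.

(* step with index i (1-based) and its height *)
Definition stepi (w : seq step) (i : nat) : step := nth ERed w i.-1.
Definition height (w : seq step) (i : nat) : int := yh w i.-1.

Definition motzkin (n : nat) (w : seq step) : Prop :=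
  size w = n /\ (forall i, i <= n -> (0 <= yh w i)%R) /\ yh w n = 0%R.

Definition restricted_bicolored (n : nat) (w : seq step) : Prop :=
  motzkin n w /\
  (forall i, 1 <= i <= n -> stepi w i = EBlue -> (0 < height w i)%R).

Definition xii (xi : seq nat) (i : nat) : nat := nth 0 xi i.-1.

Definition charlier (n : nat) (w : seq step) (xi : seq nat) : Prop :=
  restricted_bicolored n w /\ size xi = n /\
  (forall i, 1 <= i <= n ->
     (stepi w i = NE \/ stepi w i = ERed) -> xii xi i = 1) /\
  (forall i (k : nat), 1 <= i <= n ->
     (stepi w i = SE \/ stepi w i = EBlue) -> height w i = Posz k ->
     1 <= xii xi i <= k).

(* The construction of phi_l (left = true) and phi_r (left = false).
   State: (V, E). The xi-th smallest (resp. largest) element of V. *)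
Definition select (left : bool) (V : seq nat) (r : nat) : nat :=
  nth 0 (if left then sort leq V else sort geq V) r.-1.

Definition phi_step (left : bool) (w : seq step) (xi : seq nat)
    (st : seq nat * seq (nat * nat)) (i : nat) : seq nat * seq (nat * nat) :=
  let: (V, E) := st in
  match stepi w i with
  | NE => (i :: V, E)
  | ERed => (V, E)
  | SE => let x := select left V (xii xi i) in (rem x V, (x, i) :: E)
  | EBlue => let x := select left V (xii xi i) in (i :: rem x V, (x, i) :: E)
  end.

Definition phi_edges (left : bool) (w : seq step) (xi : seq nat) : seq (nat * nat) :=
  (foldl (phi_step left w xi) ([::], [::]) (iota 1 (size w))).2.

(* Elements of [n] are represented in 'I_n.+1 (the element 0 is unused). *)
Definition ground (n : nat) : {set 'I_n.+1} := [set i : 'I_n.+1 | 0 < val i].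

Definition graph_rel (n : nat) (E : seq (nat * nat)) : rel 'I_n.+1 :=
  [rel x y | ((val x, val y) \in E) || ((val y, val x) \in E)].

Definition comp_partition (n : nat) (E : seq (nat * nat)) : {set {set 'I_n.+1}} :=
  equivalence_partition (connect (@graph_rel n E)) (ground n).

Definition phi (left : bool) (n : nat) (w : seq step) (xi : seq nat)
  : {set {set 'I_n.+1}} := @comp_partition n (phi_edges left w xi).

Definition phi_l := phi true.
Definition phi_r := phi false.

Definition pedge (n : nat) (P : {set {set 'I_n.+1}}) (i j : 'I_n.+1) : bool :=
  (i < j) && [exists B in P, [&& i \in B, j \in B &
      [forall k : 'I_n.+1, ((i < k) && (k < j)) ==> (k \notin B)]]].

Definition cr (n : nat) (P : {set {set 'I_n.+1}}) (j : nat) : nat :=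
  #|[set e : ('I_n.+1 * 'I_n.+1) * ('I_n.+1 * 'I_n.+1) |
     let: ((i1, j1), (i2, j2)) := e in
     [&& pedge P i1 j1, pedge P i2 j2, val j1 == j &
         [&& i1 < i2, i2 < j1 & j1 < j2]]]|.

Definition ne (n : nat) (P : {set {set 'I_n.+1}}) (j : nat) : nat :=
  #|[set e : ('I_n.+1 * 'I_n.+1) * ('I_n.+1 * 'I_n.+1) |
     let: ((i1, j1), (i2, j2)) := e in
     [&& pedge P i1 j1, pedge P i2 j2, val j2 == j &
         [&& i1 < i2, i2 < j2 & j2 < j1]]]|.

Arguments phi left n w xi : clear implicits.
Arguments phi_l : clear implicits.
Arguments phi_r : clear implicits.

From mathcomp Require Import all_boot all_order all_algebra.

Set Implicit Arguments.
Unset Strict Implicit.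
Unset Printing Implicit Defensive.

Import GRing.Theory.

(* Every vertex enters [V] at most once and leaves it exactly when it receives
   its unique outgoing edge, so in both constructions each vertex has at most
   one incoming and one outgoing edge, all edges pointing rightwards: the
   blocks are increasing chains and the edges of the partition are exactly the
   edges of [E]. If step [j] closes the edge [(x, j)] while [V] holds [k]
   vertices, the edges passing over [j] are exactly those leaving the vertices
   of [V] other than [x]. Hence the crossings with initial edge [(x, j)] are
   counted by the elements of [V] above [x], and the nestings with interior
   edge [(x, j)] by those below [x]. As [x] is the [xi_j]-th smallest (for
   [phi_l]) or largest (for [phi_r]) element of [V], these counts are
   [xi_j - 1] and [k - xi_j]. *)

Section SortedCount.
Variables (T : eqType) (x0 : T) (r : rel T).
Hypothesis r_trans : transitive r.
Hypothesis r_asym : forall a b, r a b -> ~~ r b a.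

Let r_irr a : ~~ r a a.
Proof. by apply/negP => raa; have := r_asym raa; rewrite raa. Qed.

Lemma sorted_count_below_nth s p : sorted r s -> p < size s ->
  count (r^~ (nth x0 s p)) s = p.
Proof.
elim: s p => // a s IH [|p] /= s_sorted p_lt.
  rewrite (negbTE (r_irr a)) add0n; apply/eqP; rewrite -leqn0 leqNgt -has_count.
  rewrite -all_predC; apply: sub_all (order_path_min r_trans s_sorted) => b.
  exact: r_asym.
have /allP/(_ _ (mem_nth x0 p_lt)) -> := order_path_min r_trans s_sorted.
by rewrite IH //; apply: path_sorted s_sorted.
Qed.

Lemma sorted_count_above_nth s p : sorted r s -> p < size s ->
  count (r (nth x0 s p)) s = size s - p.+1.
Proof.
elim: s p => // a s IH [|p] /= s_sorted p_lt.
  rewrite (negbTE (r_irr a)) add0n subn1; apply/eqP; rewrite -all_count.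
  exact: order_path_min r_trans s_sorted.
have /allP/(_ _ (mem_nth x0 p_lt))/r_asym/negbTE -> :=
  order_path_min r_trans s_sorted.
by rewrite IH //; apply: path_sorted s_sorted.
Qed.

End SortedCount.

Lemma select_mem left V q : 1 <= q <= size V -> select left V q \in V.
Proof.
case/andP=> q_gt0 q_le; rewrite /select.
have q_lt : q.-1 < size V by rewrite prednK.
by case: left; [rewrite -(mem_sort leq) | rewrite -(mem_sort geq)];
  apply: mem_nth; rewrite size_sort.
Qed.

Lemma count_select left V q : uniq V -> 1 <= q <= size V ->
  let x := select left V q in
  count (fun a => a < x) V = (if left then q - 1 else size V - q) /\
  count (fun a => x < a) V = (if left then size V - q else q - 1).
Proof.
move=> V_uniq /andP[q_gt0 q_le] x.
have q_lt : q.-1 < size V by rewrite prednK.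
have counts (lt : rel nat) (le : rel nat) : transitive lt ->
    (forall a b, lt a b -> ~~ lt b a) -> sorted lt (sort le V) ->
    count (lt^~ (nth 0 (sort le V) q.-1)) V = q - 1 /\
    count (lt (nth 0 (sort le V) q.-1)) V = size V - q.
  move=> lt_trans lt_asym sorted_lt; have Vperm := permEl (perm_sort le V).
  rewrite -!(permP Vperm) sorted_count_below_nth ?sorted_count_above_nth ?size_sort
    ?prednK ?subn1 //.
have ltn_asym a b : a < b -> ~~ (b < a) by move=> ab; rewrite -leqNgt ltnW.
case: left @x => x.
- have [|//] := counts ltn leq ltn_trans ltn_asym.
  by rewrite ltn_sorted_uniq_leq sort_uniq V_uniq (sort_sorted leq_total).
- have gtn_trans : transitive gtn by move=> b a c /= ba cb; apply: ltn_trans cb ba.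
  have geq_total : total geq by move=> a b; apply: leq_total.
  have [|below above] := counts gtn geq gtn_trans (fun a b => @ltn_asym b a).
    by rewrite gtn_sorted_uniq_geq sort_uniq V_uniq (sort_sorted geq_total).
  by split.
Qed.

Lemma uniq_map_inj_in (T U : eqType) (f : T -> U) (s : seq T) :
  uniq (map f s) -> {in s &, injective f}.
Proof.
elim: s => //= z s IH /andP[fz_notin fs_uniq] x y.
rewrite !inE => /orP[/eqP-> | xs] /orP[/eqP-> | ys] // fxy.
- by rewrite fxy map_f in fz_notin.
- by rewrite -fxy map_f in fz_notin.
- exact: IH.
Qed.

Lemma card_ord_count n (s : seq nat) (p : pred nat) :
  uniq s -> {in s, forall a, a <= n} ->
  #|[set a : 'I_n.+1 | (val a \in s) && p a]| = count p s.
Proof.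
move=> s_uniq s_le; rewrite cardE -(size_map val) -size_filter.
apply/perm_size/uniq_perm; rewrite ?filter_uniq ?(map_inj_uniq val_inj) ?enum_uniq //.
move=> a; rewrite mem_filter; apply/mapP/andP=> [[b] | [pa a_s]].
  by rewrite mem_enum inE => /andP[? ?] ->.
have a_lt : a < n.+1 by rewrite ltnS s_le.
by exists (Ordinal a_lt); rewrite ?mem_enum ?inE /= ?a_s.
Qed.

Section ChainGraph.
Variables (n : nat) (E : seq (nat * nat)).
Hypothesis edge_lt : forall a b, (a, b) \in E -> 0 < a < b.
Hypothesis src_uniq : uniq (unzip1 E).
Hypothesis tgt_uniq : uniq (unzip2 E).

Lemma out_edge_uniq a b b' : (a, b) \in E -> (a, b') \in E -> b = b'.
Proof. by move=> ab ab'; case: (uniq_map_inj_in src_uniq ab ab' erefl). Qed.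

Lemma in_edge_uniq a a' b : (a, b) \in E -> (a', b) \in E -> a = a'.
Proof. by move=> ab a'b; case: (uniq_map_inj_in tgt_uniq ab a'b erefl). Qed.

Inductive reach : nat -> nat -> Prop :=
| reach_refl a : reach a a
| reach_edge a b c : (a, b) \in E -> reach b c -> reach a c.

Lemma reach_le a c : reach a c -> a <= c.
Proof.
elim=> // a' b c' /edge_lt/andP[_ ab] _ bc; exact: ltnW (leq_trans ab bc).
Qed.

Lemma reach_snoc a b c : reach a b -> (b, c) \in E -> reach a c.
Proof.
elim=> [b' | a' b' c' ab' _ IH] bc; last exact: reach_edge ab' (IH bc).
exact: reach_edge bc (reach_refl c).
Qed.

Lemma reach_first a c : reach a c -> a != c -> exists2 b, (a, b) \in E & reach b c.
Proof. by case=> [a' | a' b c' ab bc _]; [rewrite eqxx | exists b]. Qed.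

Lemma reach_last a c : reach a c -> a != c -> exists2 b, reach a b & (b, c) \in E.
Proof.
elim=> [a' | a' b c' ab bc IH _]; first by rewrite eqxx.
have [<- | b_neq_c] := eqVneq b c'; first by exists a'; first exact: reach_refl.
by have [b' ab' b'c] := IH b_neq_c; exists b'; first exact: reach_edge ab ab'.
Qed.

Local Notation g := (@graph_rel n E).

(* With at most one edge into and one edge out of each vertex, a connected
   component is a single increasing chain. *)
Lemma connect_reach (x y : 'I_n.+1) : connect g x y -> reach x y \/ reach y x.
Proof.
case/connectP=> p gp -> {y}.
elim: p x gp => [|z p IH] x /=; first by left; exact: reach_refl.
case/andP=> /orP[xz | zx] /IH{IH}; set y := last z p.
- case=> [zy | yz]; first by left; exact: reach_edge xz zy.
  have [-> | y_neq_z] := eqVneq (val y) (val z).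
    by left; exact: reach_edge xz (reach_refl _).
  have [c yc cz] := reach_last yz y_neq_z.
  by right; rewrite (in_edge_uniq xz cz).
- case=> [zy | yz]; last by right; exact: reach_snoc yz zx.
  have [<- | z_neq_y] := eqVneq (val z) (val y).
    by right; exact: reach_edge zx (reach_refl _).
  have [b zb by_] := reach_first zy z_neq_y.
  by left; rewrite (out_edge_uniq zx zb).
Qed.

Lemma connect_out_edge (x y : 'I_n.+1) :
  connect g x y -> x < y -> exists2 b, (val x, b) \in E & b <= y.
Proof.
case/connect_reach=> [xy | /reach_le]; last by rewrite leqNgt => /negbTE->.
move=> x_lt_y; have [b xb /reach_le] := reach_first xy (negbT (ltn_eqF x_lt_y)).
by exists b.
Qed.

Local Notation P := (@comp_partition n E).

Lemma comp_partition_block B (i : 'I_n.+1) :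
  B \in P -> i \in B -> B = [set k in ground n | connect g i k].
Proof.
have g_sym : connect_sym g.
  by apply: sym_connect_sym => a b; rewrite /graph_rel /= orbC.
case/imsetP=> x _ ->; rewrite inE => /andP[_ xi].
by apply/setP=> k; rewrite !inE (same_connect g_sym xi).
Qed.

Lemma pedge_comp_partition (i j : 'I_n.+1) : pedge P i j = ((val i, val j) \in E).
Proof.
apply/idP/idP.
- case/andP=> ij /existsP[B /and4P[BP iB jB /forallP between]].
  have defB := comp_partition_block BP iB.
  have [b ib b_le_j] : exists2 b, (val i, b) \in E & b <= j.
    by apply: connect_out_edge ij; move: jB; rewrite defB inE => /andP[].
  move: b_le_j; rewrite leq_eqVlt => /orP[/eqP b_eq_j | b_lt_j].
    by rewrite b_eq_j in ib.
  have b_lt : b < n.+1 by apply: ltn_trans b_lt_j (ltn_ord j).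
  have /andP[i_gt0 i_lt_b] := edge_lt ib.
  have := between (Ordinal b_lt); rewrite /= i_lt_b b_lt_j defB !inE /=.
  by rewrite (ltn_trans i_gt0 i_lt_b) connect1 // /graph_rel /= ib.
- move=> ij; have /andP[i_gt0 i_lt_j] := edge_lt ij.
  have iD : i \in ground n by rewrite inE.
  rewrite /pedge i_lt_j; apply/existsP; exists [set k in ground n | connect g i k].
  rewrite imset_f //= !inE i_gt0 connect0 /= (ltn_trans i_gt0 i_lt_j).
  rewrite connect1 /=; last by rewrite /graph_rel /= ij.
  apply/forallP=> k; apply/implyP=> /andP[i_lt_k k_lt_j]; rewrite inE.
  apply/negP=> /andP[_ ik]; have [b ib b_le_k] := connect_out_edge ik i_lt_k.
  by move: b_le_k; rewrite -(out_edge_uniq ij ib) leqNgt k_lt_j.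
Qed.

Section CrossingsAt.
(* [V] stands for the set of vertices still open just before the step [j] that
   closes the edge [(x, j)]. *)
Variables (V : seq nat) (x j : nat).
Hypothesis edge_le : forall a b, (a, b) \in E -> b <= n.
Hypothesis edge_xj : (x, j) \in E.
Hypothesis open_of_edge_over : forall a b, (a, b) \in E -> a < j < b -> a \in V.
Hypothesis edge_over_of_open :
  forall a, a \in V -> a != x -> exists2 b, j < b & (a, b) \in E.
Hypothesis open_lt : forall a, a \in V -> a < j.
Hypothesis V_uniq : uniq V.

Let into_j a : (a, j) \in E -> a = x.
Proof. by move/in_edge_uniq; apply. Qed.
Let x_lt_j : x < j. Proof. by case/andP: (edge_lt edge_xj). Qed.
Let j_lt : j < n.+1. Proof. by rewrite ltnS (edge_le edge_xj). Qed.
Let x_lt : x < n.+1. Proof. exact: ltn_trans x_lt_j j_lt. Qed.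
Let V_le a : a \in V -> a <= n.
Proof. by move/open_lt/ltn_trans/(_ j_lt). Qed.
Let edge_ord a b : (a, b) \in E -> b < n.+1.
Proof. by rewrite ltnS; apply: edge_le. Qed.

Lemma cr_comp_partition : cr P j = count (fun a => x < a) V.
Proof.
rewrite -(card_ord_count _ V_uniq V_le) /cr.
set S := [set e | _].
rewrite -(@card_in_imset _ _ (fun e => e.2.1) S).
  apply: eq_card => a; rewrite inE; apply/imsetP/andP.
  - case=> -[[i1 j1] [i2 j2]]; rewrite inE !pedge_comp_partition //=.
    case/and4P=> i1j1 i2j2 /eqP j1_eq /and3P[i1_lt i2_lt j1_lt] ->.
    rewrite j1_eq in i1j1 i2_lt j1_lt; rewrite -(into_j i1j1); split => //.
    by apply: open_of_edge_over i2j2 _; rewrite i2_lt.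
  - case=> aV x_lt_a; have [b j_lt_b ab] := edge_over_of_open aV (negbT (gtn_eqF x_lt_a)).
    exists ((Ordinal x_lt, Ordinal j_lt), (a, Ordinal (edge_ord ab))) => //.
    by rewrite inE !pedge_comp_partition //= edge_xj ab eqxx x_lt_a open_lt.
move=> [[i1 j1] [i2 j2]] [[i1' j1'] [i2' j2']]; rewrite !inE !pedge_comp_partition //=.
case/and4P=> i1j1 i2j2 /eqP j1_eq _ /and4P[i1j1' i2j2' /eqP j1_eq' _] i2_eq.
subst i2'; rewrite j1_eq in i1j1; rewrite j1_eq' in i1j1'.
have -> : j1' = j1 by apply: val_inj; rewrite /= j1_eq j1_eq'.
have -> : i1' = i1 by apply: val_inj; rewrite /= (into_j i1j1) (into_j i1j1').
by have -> : j2' = j2 by apply/val_inj/(out_edge_uniq i2j2' i2j2).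
Qed.

Lemma ne_comp_partition : ne P j = count (fun a => a < x) V.
Proof.
rewrite -(card_ord_count _ V_uniq V_le) /ne.
set S := [set e | _].
rewrite -(@card_in_imset _ _ (fun e => e.1.1) S).
  apply: eq_card => a; rewrite inE; apply/imsetP/andP.
  - case=> -[[i1 j1] [i2 j2]]; rewrite inE !pedge_comp_partition //=.
    case/and4P=> i1j1 i2j2 /eqP j2_eq /and3P[i1_lt i2_lt j2_lt] ->.
    rewrite j2_eq in i2j2 i2_lt j2_lt; rewrite -(into_j i2j2); split => //.
    by apply: open_of_edge_over i1j1 _; rewrite (ltn_trans i1_lt i2_lt).
  - case=> aV a_lt_x; have [b j_lt_b ab] := edge_over_of_open aV (negbT (ltn_eqF a_lt_x)).
    exists ((a, Ordinal (edge_ord ab)), (Ordinal x_lt, Ordinal j_lt)) => //.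
    by rewrite inE !pedge_comp_partition //= edge_xj ab eqxx a_lt_x x_lt_j.
move=> [[i1 j1] [i2 j2]] [[i1' j1'] [i2' j2']]; rewrite !inE !pedge_comp_partition //=.
case/and4P=> i1j1 i2j2 /eqP j2_eq _ /and4P[i1j1' i2j2' /eqP j2_eq' _] i1_eq.
subst i1'; rewrite j2_eq in i2j2; rewrite j2_eq' in i2j2'.
have -> : j2' = j2 by apply: val_inj; rewrite /= j2_eq j2_eq'.
have -> : i2' = i2 by apply: val_inj; rewrite /= (into_j i2j2) (into_j i2j2').
by have -> : j1' = j1 by apply/val_inj/(out_edge_uniq i1j1' i1j1).
Qed.

End CrossingsAt.

End ChainGraph.

(* The state [(V, E)] of the construction after [m] steps, with [O] the set of
   vertices opened so far. Keeping [O] abstract lets a blue East step be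
   handled as a closing step followed by an opening step. *)
Record chain_state (m : nat) (O : pred nat) (V : seq nat) (E : seq (nat * nat))
  : Prop := {
  chain_uniq : uniq V;
  chain_open : forall a, a \in V -> [&& O a, 0 < a & a <= m];
  chain_edge : forall a b, (a, b) \in E -> [&& O a, 0 < a, a < b & b <= m];
  chain_src_uniq : uniq (unzip1 E);
  chain_tgt_uniq : uniq (unzip2 E);
  chain_closed : forall a, O a -> (a \in V) = (a \notin unzip1 E) }.

Lemma eq_chain_state m O O' V E :
  O =1 O' -> chain_state m O V E -> chain_state m O' V E.
Proof.
move=> eqO [V_uniq V_open E_edge src_uniq tgt_uniq closed].
split=> // [a | a b | a]; rewrite -eqO; [exact: V_open | exact: E_edge | exact: closed].
Qed.

Lemma chain_state_skip m O V E : chain_state m O V E -> chain_state m.+1 O V E.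
Proof.
case=> V_uniq V_open E_edge src_uniq tgt_uniq closed; split=> // [a | a b].
  by case/V_open/and3P=> -> -> /leqW->.
by case/E_edge/and4P=> -> -> -> /leqW->.
Qed.

Lemma chain_state_close m O V E x : x \in V -> chain_state m O V E ->
  chain_state m.+1 O (rem x V) ((x, m.+1) :: E).
Proof.
move=> xV [V_uniq V_open E_edge src_uniq tgt_uniq closed].
have /and3P[Ox x_gt0 x_le] := V_open x xV.
split=> /=.
- exact: rem_uniq.
- by move=> a /mem_rem/V_open/and3P[-> -> /leqW->].
- move=> a b; rewrite inE => /orP[/eqP[-> ->] | /E_edge/and4P[-> -> -> /leqW->]] //.
  by rewrite Ox x_gt0 ltnS x_le leqnn.
- by rewrite -closed // xV.
- rewrite tgt_uniq andbT; apply/mapP=> -[[a b] /E_edge/and4P[_ _ _]] /= + m_eq.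
  by rewrite -m_eq ltnn.
- by move=> a Oa; rewrite mem_rem_uniq // !inE closed // negb_or eq_sym.
Qed.

Lemma chain_state_open m O V E : ~~ O m.+1 -> chain_state m.+1 O V E ->
  chain_state m.+1 (fun a => (a == m.+1) || O a) (m.+1 :: V) E.
Proof.
move=> O_new [V_uniq V_open E_edge src_uniq tgt_uniq closed].
have m_notin_src : m.+1 \notin unzip1 E.
  apply/mapP=> -[[a b] /E_edge/and4P[_ _ ab b_le]] /= m_eq.
  by move: (leq_trans ab b_le); rewrite -m_eq ltnn.
split=> //=.
- by rewrite V_uniq andbT; apply: contra O_new => /V_open/and3P[].
- move=> a; rewrite inE => /orP[/eqP-> | /V_open/and3P[-> -> ->]].
    by rewrite eqxx ltnSn.
  by rewrite orbT.
- by move=> a b /E_edge/and4P[-> -> -> ->]; rewrite orbT.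
- move=> a; rewrite inE; case: eqP => [-> _ | _ /= Oa]; first by rewrite m_notin_src.
  exact: closed.
Qed.

Section CharlierRun.
Variables (left : bool) (n : nat) (w : seq step) (xi : seq nat).
Hypothesis w_charlier : charlier n w xi.

Definition opener a := stepi w a \in [:: NE; EBlue].
Definition opened m : pred nat := fun a => (0 < a <= m) && opener a.
Definition state m := foldl (phi_step left w xi) ([::], [::]) (iota 1 m).

Lemma size_w : size w = n.
Proof. by case: w_charlier => [[[]]]. Qed.

Lemma stateS m : state m.+1 = phi_step left w xi (state m) m.+1.
Proof. by rewrite /state -[m.+1]addn1 iotaD foldl_cat add1n addn1. Qed.

Lemma yhS m : m < n -> yh w m.+1 = (yh w m + delta (stepi w m.+1))%R.
Proof.
by move=> m_lt; rewrite /yh (take_nth ERed) ?size_w // -cats1 big_cat big_seq1.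
Qed.

Lemma openedS m :
  opened m.+1 =1 if opener m.+1 then (fun a => (a == m.+1) || opened m a) else opened m.
Proof.
move=> a; rewrite /opened; have [-> | a_neq] := eqVneq a m.+1.
  by case: (opener m.+1); rewrite /= ?eqxx ?leqnn ?ltnn ?andbF.
by rewrite (leq_eqVlt a) ltnS; case: (opener m.+1); rewrite /= (negbTE a_neq).
Qed.

Lemma opened_mono m m' a : m <= m' -> opened m a -> opened m' a.
Proof.
by rewrite /opened => m_le /andP[/andP[-> a_le] ->]; rewrite (leq_trans a_le m_le).
Qed.

Lemma xi_bound m (V : seq nat) : m < n ->
  (stepi w m.+1 = SE \/ stepi w m.+1 = EBlue) -> Posz (size V) = yh w m ->
  1 <= xii xi m.+1 <= size V.
Proof.
case: w_charlier => _ [_ [_ xi_le]] m_lt closing sizeV.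
by apply: (xi_le m.+1 (size V)).
Qed.

Lemma state_invS m V E : m < n -> chain_state m (opened m) V E ->
  Posz (size V) = yh w m ->
  let st := phi_step left w xi (V, E) m.+1 in
  chain_state m.+1 (opened m.+1) st.1 st.2 /\ Posz (size st.1) = yh w m.+1.
Proof.
move=> m_lt inv sizeV; rewrite (yhS m_lt) -sizeV.
have m_new : ~~ opened m m.+1 by rewrite /opened ltnn andbF.
have select_in closing := select_mem left (xi_bound m_lt closing sizeV).
have O_eq := openedS m; rewrite /opener in O_eq.
rewrite /phi_step; case s_eq: (stepi w m.+1); rewrite s_eq /= in O_eq.
- split; last by rewrite /= intS addrC.
  exact: eq_chain_state (fsym O_eq) (chain_state_open m_new (chain_state_skip inv)).
- have xV := select_in (or_introl s_eq); split.
    exact: eq_chain_state (fsym O_eq) (chain_state_close xV inv).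
  have V_pos : 0 < size V by case: (V) xV.
  by rewrite /= size_rem // predn_int.
- split; last by rewrite /= addr0.
  exact: eq_chain_state (fsym O_eq) (chain_state_skip inv).
- have xV := select_in (or_intror s_eq); split; last first.
    by rewrite /= addr0 size_rem // prednK //; case: (V) xV.
  exact: eq_chain_state (fsym O_eq) (chain_state_open m_new (chain_state_close xV inv)).
Qed.

Lemma state_inv m : m <= n ->
  chain_state m (opened m) (state m).1 (state m).2 /\ Posz (size (state m).1) = yh w m.
Proof.
elim: m => [_ | m IH m_lt].
  by split; [split=> //= a; case: a | rewrite /yh take0 big_nil].
by rewrite stateS; case: (state m) (IH (ltnW m_lt)) => V E [inv sizeV]; apply: state_invS.
Qed.

Lemma state_edges_cat m d : exists2 E',
  (state (m + d)).2 = E' ++ (state m).2 & all (fun e => m < e.2) E'.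
Proof.
elim: d => [|d [E' E_eq E'_new]]; first by exists [::]; rewrite ?addn0.
rewrite addnS stateS; case: (state (m + d)) E_eq => V E /= ->.
rewrite /phi_step; set x := select _ _ _; set e := (x, (m + d).+1).
by case: stepi; [exists E' | exists (e :: E') | exists E' | exists (e :: E')];
  rewrite //= ltnS leq_addr.
Qed.

Lemma state_final_open : (state n).1 = [::].
Proof.
have [_] := state_inv (leqnn n).
by case: w_charlier => [[[_ [_ ->]] _] _]; case: (state n).1.
Qed.

Lemma state_final_inv : chain_state n (opened n) [::] (state n).2.
Proof. by rewrite -state_final_open; case: (state_inv (leqnn n)). Qed.

Section ClosingStep.
Variables (j k : nat).
Hypothesis j_range : 1 <= j <= n.
Hypothesis closing_j : stepi w j = EBlue \/ stepi w j = SE.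
Hypothesis height_j : height w j = Posz k.

Local Notation V := (state j.-1).1.
Local Notation E := (state n).2.
Local Notation x := (select left V (xii xi j)).

Let j_pos : j.-1.+1 = j. Proof. by rewrite prednK //; case/andP: j_range. Qed.
Let j_le : j <= n. Proof. by case/andP: j_range. Qed.

Lemma state_before_inv :
  chain_state j.-1 (opened j.-1) V (state j.-1).2 /\ Posz (size V) = yh w j.-1.
Proof. exact/state_inv/(leq_trans (leq_pred j)). Qed.

Lemma size_state_before : size V = k.
Proof. by apply/eqP; rewrite -eqz_nat (proj2 state_before_inv) -height_j. Qed.

Lemma xi_closing_range : 1 <= xii xi j <= size V.
Proof.
have [_ sizeV] := state_before_inv.
have closing : stepi w j.-1.+1 = SE \/ stepi w j.-1.+1 = EBlue.
  by rewrite j_pos; case: closing_j; [right | left].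
by rewrite -{1}j_pos; apply: xi_bound closing sizeV; rewrite j_pos.
Qed.

Lemma final_edges_cat :
  exists2 E', E = E' ++ (x, j) :: (state j.-1).2 & all (fun e => j < e.2) E'.
Proof.
have [E' E_eq E'_new] := state_edges_cat j (n - j).
exists E' => //; rewrite -(subnKC j_le) E_eq -{1}j_pos stateS.
by case: (state j.-1) => V' E0 /=; rewrite /phi_step j_pos; case: closing_j => ->.
Qed.

Lemma open_before_lt a : a \in V -> a < j.
Proof.
by case/(chain_open (proj1 state_before_inv))/and3P=> _ _; rewrite -ltnS j_pos.
Qed.

Lemma open_of_edge_over a b : (a, b) \in E -> a < j < b -> a \in V.
Proof.
move=> ab /andP[a_lt b_gt]; have [inv0 _] := state_before_inv.
have /and4P[/andP[_ opa] a_gt0 _ _] := chain_edge state_final_inv ab.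
rewrite (chain_closed inv0); last by rewrite /opened a_gt0 opa -ltnS j_pos a_lt.
apply/mapP=> -[[a' b'] ab' /= a_eq]; rewrite -a_eq in ab'.
have [E' E_eq _] := final_edges_cat.
have ab'_E : (a, b') \in E by rewrite E_eq mem_cat inE ab' !orbT.
have /and4P[_ _ _ b'_le] := chain_edge inv0 ab'.
move: b_gt; rewrite -(out_edge_uniq (chain_src_uniq state_final_inv) ab'_E ab).
by rewrite ltnNge (leq_trans b'_le (leq_pred j)).
Qed.

Lemma edge_over_of_open a : a \in V -> a != x -> exists2 b, j < b & (a, b) \in E.
Proof.
move=> aV a_neq; have [inv0 _] := state_before_inv.
have /and3P[opa _ _] := chain_open inv0 aV.
have : a \notin unzip1 E = false.
  rewrite -(chain_closed state_final_inv) //.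
  exact: opened_mono (leq_trans (leq_pred j) j_le) opa.
case/negbFE/mapP=> -[a' b] ab /= a_eq; rewrite -a_eq in ab; exists b => //.
rewrite ltnNge; apply/negP=> b_le.
have [E' E_eq E'_new] := final_edges_cat.
move: ab; rewrite E_eq mem_cat inE => /or3P[/(allP E'_new) /= | /eqP[a_x _] | ab0].
- by rewrite ltnNge b_le.
- by rewrite a_x eqxx in a_neq.
- by move: aV; rewrite (chain_closed inv0) // (map_f fst ab0).
Qed.

Lemma phi_cr_ne_count :
  cr (phi left n w xi) j = count (fun a => x < a) V /\
  ne (phi left n w xi) j = count (fun a => a < x) V.
Proof.
have [_ _ E_edge src_uniq tgt_uniq _] := state_final_inv.
have edge_lt a b : (a, b) \in E -> 0 < a < b by case/E_edge/and4P=> _ -> ->.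
have edge_le a b : (a, b) \in E -> b <= n by case/E_edge/and4P.
have edge_xj : (x, j) \in E.
  by have [E' -> _] := final_edges_cat; rewrite mem_cat mem_head orbT.
have V_uniq := chain_uniq (proj1 state_before_inv).
have -> : phi left n w xi = comp_partition n E by rewrite /phi /phi_edges size_w.
have crossings := cr_comp_partition edge_lt src_uniq tgt_uniq edge_le edge_xj
  open_of_edge_over edge_over_of_open open_before_lt V_uniq.
have nestings := ne_comp_partition edge_lt src_uniq tgt_uniq edge_le edge_xj
  open_of_edge_over edge_over_of_open open_before_lt V_uniq.
by rewrite crossings nestings.
Qed.

Lemma phi_cr_ne :
  cr (phi left n w xi) j = (if left then k - xii xi j else xii xi j - 1) /\
  ne (phi left n w xi) j = (if left then xii xi j - 1 else k - xii xi j).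
Proof.
have [-> ->] := phi_cr_ne_count.
have V_uniq := chain_uniq (proj1 state_before_inv).
have [below above] := count_select left V_uniq xi_closing_range.
by rewrite below above size_state_before; case: left.
Qed.

End ClosingStep.

End CharlierRun.

Theorem proposition3p2 (n : nat) (w : seq step) (xi : seq nat) (j k : nat) :
  charlier n w xi ->
  1 <= j <= n ->
  (stepi w j = EBlue \/ stepi w j = SE) ->
  height w j = Posz k ->
  [/\ cr (phi_r n w xi) j = (xii xi j - 1)%N,
      ne (phi_l n w xi) j = (xii xi j - 1)%N,
      ne (phi_r n w xi) j = (k - xii xi j)%N &
      cr (phi_l n w xi) j = (k - xii xi j)%N].
Proof.
move=> w_charlier j_range closing_j height_j.
have [cr_r ne_r] := phi_cr_ne false w_charlier j_range closing_j height_j.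
have [cr_l ne_l] := phi_cr_ne true w_charlier j_range closing_j height_j.
by split.
Qed.
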